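(* Let $\Psi$ be a well-formed declarative context and $A,B$ declarative types. If $\Psi\vdash A\le B$, then there is a context $\Delta$ such that $\Psi\vdash A<:B\dashv\Delta$.
   Context: Declarative types $A ::= 1\mid\alpha\mid\forall\alpha.A\mid A\to B$; declarative contexts $\Psi ::= \cdot\mid\Psi,\alpha\mid\Psi,x:A$. Declarative subtyping $\Psi\vdash A\le B$: least relation with $\alpha\in\Psi\Rightarrow\Psi\vdash\alpha\le\alpha$; $\Psi\vdash1\le1$; ($\Psi\vdash B_1\le A_1$, $\Psi\vdash A_2\le B_2$) $\Rightarrow\Psi\vdash A_1\to A_2\le B_1\to B_2$; ($\Psi\vdash\tau$ for a quantifier-free $\tau$ whose variables are in $\Psi$, $\Psi\vdash[\tau/\alpha]A\le B$) $\Rightarrow\Psi\vdash\forall\alpha.A\le B$; $\Psi,\beta\vdash A\le B\Rightarrow\Psi\vdash A\le\forall\beta.B$. Algorithmic types add existential variables $\hat\alpha$: $A ::= 1\mid\alpha\mid\hat\alpha\mid\forall\alpha.A\mid A\to B$; monotypes $\tau ::= 1\mid\alpha\mid\hat\alpha\mid\tau\to\tau'$. Algorithmic contexts $\Gamma ::= \cdot\mid\Gamma,\alpha\mid\Gamma,x:A\mid\Gamma,\hat\alpha\mid\Gamma,\hat\alpha=\tau\mid\Gamma,\blacktriangleright_{\hat\alpha}$, each variable declared at most once, each type/solution well-formed under the prefix to its left. $\Gamma\vdash A$: $\alpha$ declared in $\Gamma$, $\hat\alpha$ declared (solved or not), arrows componentwise, $\Gamma\vdash\forall\alpha.A$ iff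 $\Gamma,\alpha\vdash A$. $\Gamma[\Theta]$ denotes a context with $\Theta$ inside; $\Gamma[\hat\alpha][\hat\beta]$ means $\hat\alpha$ declared left of $\hat\beta$. $[\Gamma]A$ replaces each solved $\hat\alpha$ ($\hat\alpha=\tau\in\Gamma$) by $[\Gamma]\tau$, recursively. Variables introduced in premises are fresh. Algorithmic subtyping $\Gamma\vdash A<:B\dashv\Delta$: $\Gamma[\alpha]\vdash\alpha<:\alpha\dashv\Gamma[\alpha]$; $\Gamma\vdash1<:1\dashv\Gamma$; $\Gamma[\hat\alpha]\vdash\hat\alpha<:\hat\alpha\dashv\Gamma[\hat\alpha]$; ($\Gamma\vdash B_1<:A_1\dashv\Theta$, $\Theta\vdash[\Theta]A_2<:[\Theta]B_2\dashv\Delta$) $\Rightarrow\Gamma\vdash A_1\to A_2<:B_1\to B_2\dashv\Delta$; $\Gamma,\blacktriangleright_{\hat\alpha},\hat\alpha\vdash[\hat\alpha/\alpha]A<:B\dashv\Delta,\blacktriangleright_{\hat\alpha},\Theta\Rightarrow\Gamma\vdash\forall\alpha.A<:B\dashv\Delta$; $\Gamma,\alpha\vdash A<:B\dashv\Delta,\alpha,\Theta\Rightarrow\Gamma\vdash A<:\forall\alpha.B\dashv\Delta$; ($\hat\alpha\notin FV(A)$, $\Gamma[\hat\alpha]\vdash\hat\alpha:\leqq A\dashv\Delta$) $\Rightarrow\Gamma[\hat\alpha]\vdash\hat\alpha<:A\dashv\Delta$; ($\hat\alpha\notin FV(A)$, $\Gamma[\hat\alpha]\vdash A\leqq:\hat\alpha\dashv\Delta$)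 $\Rightarrow\Gamma[\hat\alpha]\vdash A<:\hat\alpha\dashv\Delta$. Instantiation $\Gamma\vdash\hat\alpha:\leqq A\dashv\Delta$: ($\Gamma\vdash\tau$) $\Rightarrow\Gamma,\hat\alpha,\Gamma'\vdash\hat\alpha:\leqq\tau\dashv\Gamma,\hat\alpha=\tau,\Gamma'$; $\Gamma[\hat\alpha][\hat\beta]\vdash\hat\alpha:\leqq\hat\beta\dashv\Gamma[\hat\alpha][\hat\beta=\hat\alpha]$; ($\Gamma[\hat\alpha_2,\hat\alpha_1,\hat\alpha=\hat\alpha_1\to\hat\alpha_2]\vdash A_1\leqq:\hat\alpha_1\dashv\Theta$, $\Theta\vdash\hat\alpha_2:\leqq[\Theta]A_2\dashv\Delta$) $\Rightarrow\Gamma[\hat\alpha]\vdash\hat\alpha:\leqq A_1\to A_2\dashv\Delta$; $\Gamma[\hat\alpha],\beta\vdash\hat\alpha:\leqq B\dashv\Delta,\beta,\Delta'\Rightarrow\Gamma[\hat\alpha]\vdash\hat\alpha:\leqq\forall\beta.B\dashv\Delta$. Instantiation $\Gamma\vdash A\leqq:\hat\alpha\dashv\Delta$: ($\Gamma\vdash\tau$) $\Rightarrow\Gamma,\hat\alpha,\Gamma'\vdash\tau\leqq:\hat\alpha\dashv\Gamma,\hat\alpha=\tau,\Gamma'$; $\Gamma[\hat\alpha][\hat\beta]\vdash\hat\beta\leqq:\hat\alpha\dashv\Gamma[\hat\alpha][\hat\beta=\hat\alpha]$; ($\Gamma[\hat\alpha_2,\hat\alpha_1,\hat\alpha=\hat\alpha_1\to\hat\alpha_2]\vdash\hat\alpha_1:\leqq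 A_1\dashv\Theta$, $\Theta\vdash[\Theta]A_2\leqq:\hat\alpha_2\dashv\Delta$) $\Rightarrow\Gamma[\hat\alpha]\vdash A_1\to A_2\leqq:\hat\alpha\dashv\Delta$; $\Gamma[\hat\alpha],\blacktriangleright_{\hat\beta},\hat\beta\vdash[\hat\beta/\beta]B\leqq:\hat\alpha\dashv\Delta,\blacktriangleright_{\hat\beta},\Delta'\Rightarrow\Gamma[\hat\alpha]\vdash\forall\beta.B\leqq:\hat\alpha\dashv\Delta$. *)

(* Locally nameless representation of the (algorithmic)
   types of Dunfield & Krishnaswami; declarative types are those without
   existential variables. *)
From Stdlib Require Import List Arith.
Import ListNotations.

(* Types.  [TBVar n] is a bound (de Bruijn) variable, [TFVar a] a free
   universal variable alpha, [TEx a] an existential variable alpha-hat,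
   [TAll A] is forall alpha. A (A's bound index 0 is alpha). *)
Inductive typ : Type :=
| TUnit : typ
| TBVar : nat -> typ
| TFVar : nat -> typ
| TEx   : nat -> typ
| TAll  : typ -> typ
| TArr  : typ -> typ -> typ.

Fixpoint open_rec (k : nat) (u : typ) (A : typ) : typ :=
  match A with
  | TUnit => TUnit
  | TBVar n => if Nat.eqb n k then u else TBVar n
  | TFVar a => TFVar a
  | TEx a => TEx a
  | TAll B => TAll (open_rec (S k) u B)
  | TArr B C => TArr (open_rec k u B) (open_rec k u C)
  end.
Definition open (A u : typ) : typ := open_rec 0 u A.

Fixpoint subst_ex (a : nat) (t : typ) (A : typ) : typ :=
  match A with
  | TUnit => TUnit
  | TBVar n => TBVar n
  | TFVar b => TFVar b
  | TEx b => if Nat.eqb a b then t else TEx b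
  | TAll B => TAll (subst_ex a t B)
  | TArr B C => TArr (subst_ex a t B) (subst_ex a t C)
  end.

Fixpoint fv_u (A : typ) : list nat :=
  match A with
  | TFVar a => [a]
  | TAll B => fv_u B
  | TArr B C => fv_u B ++ fv_u C
  | _ => []
  end.
Fixpoint fv_e (A : typ) : list nat :=
  match A with
  | TEx a => [a]
  | TAll B => fv_e B
  | TArr B C => fv_e B ++ fv_e C
  | _ => []
  end.

Fixpoint mono (A : typ) : Prop :=
  match A with
  | TAll _ => False
  | TArr B C => mono B /\ mono C
  | _ => True
  end.

Definition decl_typ (A : typ) : Prop := fv_e A = [].

(* Context entries; contexts are lists read left to right. *)
Inductive entry : Type :=
| CUVar   : nat -> entry
| CVar    : nat -> typ -> entry
| CEx     : nat -> entry
| CSolved : nat -> typ -> entry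
| CMarker : nat -> entry.

Definition ctx := list entry.

Fixpoint uvars (G : ctx) : list nat :=
  match G with
  | [] => []
  | CUVar a :: G' => a :: uvars G'
  | _ :: G' => uvars G'
  end.
Fixpoint tvars (G : ctx) : list nat :=
  match G with
  | [] => []
  | CVar x _ :: G' => x :: tvars G'
  | _ :: G' => tvars G'
  end.
Fixpoint evars (G : ctx) : list nat :=
  match G with
  | [] => []
  | CEx a :: G' => a :: evars G'
  | CSolved a _ :: G' => a :: evars G'
  | _ :: G' => evars G'
  end.
Fixpoint markers (G : ctx) : list nat :=
  match G with
  | [] => []
  | CMarker a :: G' => a :: markers G'
  | _ :: G' => markers G'
  end.

Fixpoint wf_typ_at (G : ctx) (k : nat) (A : typ) : Prop :=
  match A with
  | TUnit => True
  | TBVar n => n < k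
  | TFVar a => In a (uvars G)
  | TEx a => In a (evars G)
  | TAll B => wf_typ_at G (S k) B
  | TArr B C => wf_typ_at G k B /\ wf_typ_at G k C
  end.
Definition wf_typ (G : ctx) (A : typ) : Prop := wf_typ_at G 0 A.

Inductive wf_ctx : ctx -> Prop :=
| wf_nil : wf_ctx []
| wf_uvar : forall G a, wf_ctx G -> ~ In a (uvars G) -> wf_ctx (G ++ [CUVar a])
| wf_var : forall G x A, wf_ctx G -> ~ In x (tvars G) -> wf_typ G A ->
    wf_ctx (G ++ [CVar x A])
| wf_ex : forall G a, wf_ctx G -> ~ In a (evars G) -> wf_ctx (G ++ [CEx a])
| wf_solved : forall G a t, wf_ctx G -> ~ In a (evars G) -> mono t ->
    wf_typ G t -> wf_ctx (G ++ [CSolved a t])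
| wf_marker : forall G a, wf_ctx G -> ~ In a (markers G) -> ~ In a (evars G) ->
    wf_ctx (G ++ [CMarker a]).

Definition decl_entry (e : entry) : Prop :=
  match e with
  | CUVar _ => True
  | CVar _ A => decl_typ A
  | _ => False
  end.
Definition decl_ctx (G : ctx) : Prop := Forall decl_entry G.

(* [Gamma]A : rightmost solutions are applied first; since a solution only
   mentions variables to its left, this replaces each solved alpha-hat by
   [Gamma]tau recursively. *)
Definition apply_ctx (G : ctx) (A : typ) : typ :=
  fold_right (fun e B => match e with
                         | CSolved a t => subst_ex a t B
                         | _ => B
                         end) A G.

Definition fresh_u (G : ctx) (a : nat) (As : list typ) : Prop :=
  ~ In a (uvars G) /\ Forall (fun A => ~ In a (fv_u A)) As.
Definition fresh_e (G : ctx) (a : nat) (As : list typ) : Prop :=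
  ~ In a (evars G) /\ ~ In a (markers G) /\ Forall (fun A => ~ In a (fv_e A)) As.

Inductive dsub : ctx -> typ -> typ -> Prop :=
| dsub_var : forall P a, In (CUVar a) P -> dsub P (TFVar a) (TFVar a)
| dsub_unit : forall P, dsub P TUnit TUnit
| dsub_arr : forall P A1 A2 B1 B2,
    dsub P B1 A1 -> dsub P A2 B2 -> dsub P (TArr A1 A2) (TArr B1 B2)
| dsub_allL : forall P A B t,
    mono t -> wf_typ P t -> dsub P (open A t) B -> dsub P (TAll A) B
| dsub_allR : forall P A B b,
    fresh_u P b [A; B] ->
    dsub (P ++ [CUVar b]) A (open B (TFVar b)) -> dsub P A (TAll B).

Inductive asub : ctx -> typ -> typ -> ctx -> Prop :=
| asub_var : forall G a, In (CUVar a) G -> asub G (TFVar a) (TFVar a) G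
| asub_unit : forall G, asub G TUnit TUnit G
| asub_ex : forall G a, In (CEx a) G -> asub G (TEx a) (TEx a) G
| asub_arr : forall G T D A1 A2 B1 B2,
    asub G B1 A1 T ->
    asub T (apply_ctx T A2) (apply_ctx T B2) D ->
    asub G (TArr A1 A2) (TArr B1 B2) D
| asub_allL : forall G A B a D Th,
    fresh_e G a [A; B] ->
    asub (G ++ [CMarker a; CEx a]) (open A (TEx a)) B (D ++ [CMarker a] ++ Th) ->
    asub G (TAll A) B D
| asub_allR : forall G A B a D Th,
    fresh_u G a [A; B] ->
    asub (G ++ [CUVar a]) A (open B (TFVar a)) (D ++ [CUVar a] ++ Th) ->
    asub G A (TAll B) D
| asub_instL : forall G a A D,
    In (CEx a) G -> ~ In a (fv_e A) -> inst_l G a A D -> asub G (TEx a) A D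
| asub_instR : forall G a A D,
    In (CEx a) G -> ~ In a (fv_e A) -> inst_r G A a D -> asub G A (TEx a) D

with inst_l : ctx -> nat -> typ -> ctx -> Prop :=
| instl_solve : forall G1 G2 a t,
    mono t -> wf_typ G1 t ->
    inst_l (G1 ++ CEx a :: G2) a t (G1 ++ CSolved a t :: G2)
| instl_reach : forall G1 G2 G3 a b,
    inst_l (G1 ++ CEx a :: G2 ++ CEx b :: G3) a (TEx b)
           (G1 ++ CEx a :: G2 ++ CSolved b (TEx a) :: G3)
| instl_arr : forall G1 G2 a a1 a2 A1 A2 T D,
    a1 <> a2 -> a1 <> a -> a2 <> a ->
    fresh_e (G1 ++ CEx a :: G2) a1 [A1; A2] ->
    fresh_e (G1 ++ CEx a :: G2) a2 [A1; A2] ->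
    inst_r (G1 ++ [CEx a2; CEx a1; CSolved a (TArr (TEx a1) (TEx a2))] ++ G2)
           A1 a1 T ->
    inst_l T a2 (apply_ctx T A2) D ->
    inst_l (G1 ++ CEx a :: G2) a (TArr A1 A2) D
| instl_allR : forall G a b B D D',
    In (CEx a) G -> fresh_u G b [B] ->
    inst_l (G ++ [CUVar b]) a (open B (TFVar b)) (D ++ CUVar b :: D') ->
    inst_l G a (TAll B) D

with inst_r : ctx -> typ -> nat -> ctx -> Prop :=
| instr_solve : forall G1 G2 a t,
    mono t -> wf_typ G1 t ->
    inst_r (G1 ++ CEx a :: G2) t a (G1 ++ CSolved a t :: G2)
| instr_reach : forall G1 G2 G3 a b,
    inst_r (G1 ++ CEx a :: G2 ++ CEx b :: G3) (TEx b) a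
           (G1 ++ CEx a :: G2 ++ CSolved b (TEx a) :: G3)
| instr_arr : forall G1 G2 a a1 a2 A1 A2 T D,
    a1 <> a2 -> a1 <> a -> a2 <> a ->
    fresh_e (G1 ++ CEx a :: G2) a1 [A1; A2] ->
    fresh_e (G1 ++ CEx a :: G2) a2 [A1; A2] ->
    inst_l (G1 ++ [CEx a2; CEx a1; CSolved a (TArr (TEx a1) (TEx a2))] ++ G2)
           a1 A1 T ->
    inst_r T (apply_ctx T A2) a2 D ->
    inst_r (G1 ++ CEx a :: G2) (TArr A1 A2) a D
| instr_allL : forall G a b B D D',
    In (CEx a) G -> fresh_e G b [B] ->
    inst_r (G ++ [CMarker b; CEx b]) (open B (TEx b)) a (D ++ CMarker b :: D') ->
    inst_r G (TAll B) a D.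

(* Following Dunfield and Krishnaswami, the algorithm is run on types whose existentials are
   completed into monotypes by a substitution [th], and one shows by induction on the
   declarative derivation of [[th]A <= [th]B] that the algorithm succeeds from [G], yielding an
   extension [D] of [G] together with a completion of [D] agreeing with [th] on [G].
   When one side is an unsolved existential [a], the occurs check holds because subtyping
   against the monotype [th a] never adds arrows, and completeness of instantiation is proved
   by lexicographic induction on [th a] and the type: articulating [a] shrinks [th a], while
   the second premise [[T]B2] may be larger than [B2]. *)

From Stdlib Require Import List Arith Lia Permutation.
Import ListNotations.

Fixpoint esubst (th : nat -> typ) (A : typ) : typ :=
  match A with
  | TEx c => th c
  | TAll B => TAll (esubst th B)
  | TArr B C => TArr (esubst th B) (esubst th C)
  | X => X
  end.

Fixpoint lc_at (k : nat) (A : typ) : Prop :=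
  match A with
  | TBVar n => n < k
  | TAll B => lc_at (S k) B
  | TArr B C => lc_at k B /\ lc_at k C
  | _ => True
  end.

Fixpoint typ_size (A : typ) : nat :=
  match A with
  | TAll B => S (typ_size B)
  | TArr B C => S (typ_size B + typ_size C)
  | _ => 1
  end.

Fixpoint arr_size (A : typ) : nat :=
  match A with
  | TAll B => arr_size B
  | TArr B C => S (arr_size B + arr_size C)
  | _ => 1
  end.

Lemma typ_size_pos (A : typ) : 1 <= typ_size A.
Proof. destruct A; simpl; lia. Qed.

Lemma arr_size_pos (A : typ) : 1 <= arr_size A.
Proof. induction A; simpl; lia. Qed.

Lemma open_rec_lc (A u : typ) (j k : nat) : lc_at j A -> j <= k -> open_rec k u A = A.
Proof.
  revert j k; induction A; simpl; intros j k Hlc Hjk; auto.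
  - destruct (Nat.eqb_spec n k); [lia | auto].
  - f_equal; apply IHA with (j := S j); auto; lia.
  - destruct Hlc; f_equal; eauto.
Qed.

Lemma esubst_open_rec (th : nat -> typ) (A u : typ) (k : nat) :
  (forall c, lc_at 0 (th c)) ->
  esubst th (open_rec k u A) = open_rec k (esubst th u) (esubst th A).
Proof.
  intros Hlc; revert k; induction A; simpl; intros k; f_equal; auto.
  - destruct (Nat.eqb n k); auto.
  - symmetry; apply open_rec_lc with (j := 0); auto; lia.
Qed.

Lemma typ_size_open_rec (A u : typ) (k : nat) :
  typ_size u = 1 -> typ_size (open_rec k u A) = typ_size A.
Proof.
  intros Hu; revert k; induction A; simpl; intros k; auto.
  destruct (Nat.eqb n k); auto.
Qed.

Lemma arr_size_open_rec (A u : typ) (k : nat) : arr_size A <= arr_size (open_rec k u A).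
Proof.
  revert k; induction A; simpl; intros k; auto.
  - destruct (Nat.eqb n k); auto using arr_size_pos.
  - specialize (IHA1 k); specialize (IHA2 k); lia.
Qed.

Lemma fv_e_open_rec_fvar (A : typ) (k b : nat) : fv_e (open_rec k (TFVar b) A) = fv_e A.
Proof.
  revert k; induction A; simpl; intros k; auto.
  - destruct (Nat.eqb n k); auto.
  - rewrite IHA1, IHA2; auto.
Qed.

Lemma fv_e_open_rec_ex (A : typ) (k b x : nat) :
  In x (fv_e (open_rec k (TEx b) A)) -> x = b \/ In x (fv_e A).
Proof.
  revert k; induction A; simpl; intros k Hx; eauto.
  - destruct (Nat.eqb n k); simpl in *; intuition.
  - rewrite in_app_iff in *; destruct Hx as [Hx|Hx];
      [destruct (IHA1 _ Hx) | destruct (IHA2 _ Hx)]; auto.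
Qed.

Lemma fv_u_esubst (th : nat -> typ) (A : typ) (x : nat) :
  In x (fv_u A) -> In x (fv_u (esubst th A)).
Proof. induction A; simpl; rewrite ?in_app_iff; intuition. Qed.

Lemma esubst_ext_in (th th' : nat -> typ) (A : typ) :
  (forall c, In c (fv_e A) -> th c = th' c) -> esubst th A = esubst th' A.
Proof.
  induction A; simpl; intros Hag; f_equal; auto;
    [apply IHA1 | apply IHA2]; intros c Hc; apply Hag; rewrite in_app_iff; auto.
Qed.

Lemma esubst_decl (th : nat -> typ) (A : typ) : decl_typ A -> esubst th A = A.
Proof.
  unfold decl_typ; induction A; simpl; intros HA; f_equal; try discriminate; auto;
    apply app_eq_nil in HA; tauto.
Qed.

Lemma arr_size_esubst_in (th : nat -> typ) (A : typ) (a : nat) :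
  In a (fv_e A) -> arr_size (th a) <= arr_size (esubst th A).
Proof.
  induction A; simpl; intros Ha; try contradiction.
  - destruct Ha as [<-|[]]; auto.
  - auto.
  - rewrite in_app_iff in Ha; destruct Ha as [Ha|Ha];
      [specialize (IHA1 Ha) | specialize (IHA2 Ha)]; lia.
Qed.

Lemma arr_size_esubst_arr (th : nat -> typ) (A1 A2 : typ) (a : nat) :
  In a (fv_e (TArr A1 A2)) -> arr_size (th a) < arr_size (esubst th (TArr A1 A2)).
Proof.
  simpl; rewrite in_app_iff; intros [Ha|Ha];
    pose proof (arr_size_esubst_in th _ _ Ha); lia.
Qed.

Lemma exists_fresh (l : list nat) : exists x, ~ In x l.
Proof.
  exists (S (list_max l)); intros Hin.
  assert (Hle : Forall (fun k => k <= list_max l) l) by (apply list_max_le; auto).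
  rewrite Forall_forall in Hle; specialize (Hle _ Hin); lia.
Qed.

Lemma wf_typ_at_lc (G : ctx) (A : typ) (k : nat) : wf_typ_at G k A -> lc_at k A.
Proof. revert k; induction A; simpl; intuition. Qed.

Lemma wf_typ_at_fv_u (G : ctx) (A : typ) (k x : nat) :
  wf_typ_at G k A -> In x (fv_u A) -> In x (uvars G).
Proof.
  revert k; induction A; simpl; intros k Hw Hx; rewrite ?in_app_iff in Hx; try contradiction;
    [destruct Hx as [<-|[]]; auto | eauto | destruct Hw, Hx; eauto].
Qed.

Lemma wf_typ_at_intro (G : ctx) (A : typ) (k : nat) :
  lc_at k A -> (forall x, In x (fv_u A) -> In x (uvars G)) ->
  (forall x, In x (fv_e A) -> In x (evars G)) -> wf_typ_at G k A.
Proof.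
  revert k; induction A; simpl; intros k Hlc Hu He; auto.
  destruct Hlc; split; [apply IHA1 | apply IHA2]; auto;
    intros; first [apply Hu | apply He]; rewrite in_app_iff; auto.
Qed.

Definition entry_uvars (e : entry) : list nat :=
  match e with CUVar a => [a] | _ => [] end.
Definition entry_evars (e : entry) : list nat :=
  match e with CEx a | CSolved a _ => [a] | _ => [] end.

Lemma uvars_cons (e : entry) (G : ctx) : uvars (e :: G) = entry_uvars e ++ uvars G.
Proof. destruct e; reflexivity. Qed.
Lemma evars_cons (e : entry) (G : ctx) : evars (e :: G) = entry_evars e ++ evars G.
Proof. destruct e; reflexivity. Qed.

Lemma uvars_app (G1 G2 : ctx) : uvars (G1 ++ G2) = uvars G1 ++ uvars G2.
Proof.
  induction G1 as [|e G1 IH]; auto.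
  rewrite <- app_comm_cons, !uvars_cons, IH, app_assoc; auto.
Qed.
Lemma evars_app (G1 G2 : ctx) : evars (G1 ++ G2) = evars G1 ++ evars G2.
Proof.
  induction G1 as [|e G1 IH]; auto.
  rewrite <- app_comm_cons, !evars_cons, IH, app_assoc; auto.
Qed.

Lemma in_uvars_iff (G : ctx) (a : nat) : In (CUVar a) G <-> In a (uvars G).
Proof.
  induction G as [|e G IH]; simpl; [tauto|].
  destruct e; simpl; rewrite IH; intuition congruence.
Qed.

Lemma in_markers_iff (G : ctx) (a : nat) : In (CMarker a) G <-> In a (markers G).
Proof.
  induction G as [|e G IH]; simpl; [tauto|].
  destruct e; simpl; rewrite IH; intuition congruence.
Qed.

Lemma in_evars_CEx (G : ctx) (c : nat) : In (CEx c) G -> In c (evars G).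
Proof.
  induction G as [|e G IH]; simpl; [tauto|]. intros [He|He]; subst; simpl; auto.
  destruct e; simpl; auto.
Qed.

Lemma in_evars_CSolved (G : ctx) (c : nat) (t : typ) : In (CSolved c t) G -> In c (evars G).
Proof.
  induction G as [|e G IH]; simpl; [tauto|]. intros [He|He]; subst; simpl; eauto.
  destruct e; simpl; eauto.
Qed.

Lemma in_evars_inv (G : ctx) (c : nat) :
  In c (evars G) -> In (CEx c) G \/ exists t, In (CSolved c t) G.
Proof.
  induction G as [|e G IH]; intros Hc; [contradiction|].
  rewrite evars_cons, in_app_iff in Hc; destruct Hc as [Hc|Hc].
  - destruct e; simpl in Hc; try contradiction; destruct Hc as [<-|[]]; simpl; eauto.
  - destruct (IH Hc) as [H|[t H]]; simpl; eauto.
Qed.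

Lemma in_evars_unsolved (G : ctx) (c : nat) :
  In c (evars G) -> (forall t, ~ In (CSolved c t) G) -> In (CEx c) G.
Proof.
  intros Hc Hns; destruct (in_evars_inv G c Hc) as [?|[t Ht]]; [auto | destruct (Hns t Ht)].
Qed.

Lemma NoDup_app_disjoint (l1 l2 : list nat) (x : nat) :
  NoDup (l1 ++ l2) -> In x l1 -> ~ In x l2.
Proof.
  induction l1 as [|y l1 IH]; simpl; intros Hnd Hx; [contradiction|].
  inversion Hnd as [|? ? Hy Hnd']; subst.
  destruct Hx as [<-|Hx]; auto. intros Hx2; apply Hy; rewrite in_app_iff; auto.
Qed.

Lemma NoDup_evars_solved_unsolved (G : ctx) (c : nat) (t : typ) :
  NoDup (evars G) -> In (CEx c) G -> In (CSolved c t) G -> False.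
Proof.
  induction G as [|e G IH]; intros Hnd Hc Ht; [contradiction|].
  rewrite evars_cons in Hnd; simpl in Hc, Ht.
  destruct Hc as [Hc|Hc], Ht as [Ht|Ht]; subst; try discriminate.
  - apply (NoDup_app_disjoint [c] (evars G) c Hnd); simpl; eauto using in_evars_CSolved.
  - apply (NoDup_app_disjoint [c] (evars G) c Hnd); simpl; eauto using in_evars_CEx.
  - exact (IH (NoDup_app_remove_l _ _ Hnd) Hc Ht).
Qed.

Definition entry_respects (th : nat -> typ) (U E : list nat) (e : entry) : Prop :=
  match e with
  | CEx b => forall x, In x (fv_u (th b)) -> In x U
  | CSolved b t => th b = esubst th t /\ (forall x, In x (fv_e t) -> In x E)
  | _ => True
  end.

(* [U] and [E] accumulate the universal and existential variables declared to the left. *)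
Fixpoint respects (th : nat -> typ) (U E : list nat) (G : ctx) : Prop :=
  match G with
  | [] => True
  | e :: G' => entry_respects th U E e /\
               respects th (U ++ entry_uvars e) (E ++ entry_evars e) G'
  end.

(* [th] plays the role of a complete context extending [G]. *)
Definition completes (G : ctx) (th : nat -> typ) : Prop :=
  respects th [] [] G /\ NoDup (evars G) /\ (forall c, mono (th c) /\ lc_at 0 (th c)).

Lemma respects_app (th : nat -> typ) (G1 G2 : ctx) (U E : list nat) :
  respects th U E (G1 ++ G2) <->
  respects th U E G1 /\ respects th (U ++ uvars G1) (E ++ evars G1) G2.
Proof.
  revert U E; induction G1 as [|e G1 IH]; cbn [app respects]; intros U E.
  - simpl; rewrite !app_nil_r; tauto.
  - rewrite IH, uvars_cons, evars_cons, !app_assoc; tauto.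
Qed.

Lemma respects_weaken (th : nat -> typ) (G : ctx) (U E U' E' : list nat) :
  incl U U' -> incl E E' -> respects th U E G -> respects th U' E' G.
Proof.
  revert U E U' E'; induction G as [|e G IH]; simpl; intros U E U' E' HU HE; [auto|].
  intros [He HG].
  split; [destruct e; simpl in *; intuition |].
  eapply IH; [| | eauto]; apply incl_app_app; auto using incl_refl.
Qed.

Lemma respects_agree (th th' : nat -> typ) (G : ctx) (U E : list nat) :
  (forall c, In c E \/ In c (evars G) -> th' c = th c) ->
  respects th U E G -> respects th' U E G.
Proof.
  revert U E; induction G as [|e G IH]; cbn [respects]; intros U E Hag; [auto|].
  intros [He HG]; split.
  - destruct e; simpl in *; auto.
    + rewrite Hag by (right; simpl; auto); auto.
    + destruct He as [Hn Ht]; split; auto.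
      rewrite Hag, Hn by (right; simpl; auto).
      apply esubst_ext_in; intros; symmetry; apply Hag; auto.
  - apply IH; auto. intros c Hc; apply Hag.
    rewrite evars_cons, !in_app_iff in *; tauto.
Qed.

Lemma respects_solved (th : nat -> typ) (G : ctx) (U E : list nat) (b : nat) (t : typ) :
  respects th U E G -> In (CSolved b t) G -> th b = esubst th t.
Proof.
  revert U E; induction G as [|e G IH]; simpl; intros U E HG Hin; [contradiction|].
  destruct Hin as [Hin|Hin]; [subst; apply HG | eapply IH; [apply HG | auto]].
Qed.

Lemma respects_replace (th : nat -> typ) (U E : list nat) (G1 G2 : ctx) (e e' : entry) :
  respects th U E (G1 ++ e :: G2) -> entry_respects th (U ++ uvars G1) (E ++ evars G1) e' ->
  entry_uvars e' = entry_uvars e -> entry_evars e' = entry_evars e ->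
  respects th U E (G1 ++ e' :: G2).
Proof.
  rewrite !respects_app; simpl; intros [H1 [_ H2]] He' Hu Hv.
  rewrite Hu, Hv; auto.
Qed.

Lemma esubst_subst_ex (th : nat -> typ) (b : nat) (t X : typ) :
  th b = esubst th t -> esubst th (subst_ex b t X) = esubst th X.
Proof.
  intros Hb; induction X; simpl; f_equal; auto.
  destruct (Nat.eqb_spec b n); subst; auto.
Qed.

Lemma esubst_apply_ctx (th : nat -> typ) (T : ctx) (A : typ) :
  (forall b t, In (CSolved b t) T -> th b = esubst th t) ->
  esubst th (apply_ctx T A) = esubst th A.
Proof.
  induction T as [|e T IH]; intros Hsol; auto.
  assert (IH' : esubst th (apply_ctx T A) = esubst th A)
    by (apply IH; intros; apply Hsol; simpl; auto).
  destruct e; simpl; auto.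
  rewrite esubst_subst_ex; auto. apply Hsol; simpl; auto.
Qed.

Lemma fv_e_subst_ex (b c : nat) (t Y : typ) :
  In c (fv_e (subst_ex b t Y)) ->
  (In c (fv_e Y) /\ c <> b) \/ (In c (fv_e t) /\ In b (fv_e Y)).
Proof.
  induction Y; simpl; intros Hc; auto.
  - destruct (Nat.eqb_spec b n); subst; simpl in *; auto.
    destruct Hc as [<-|[]]; auto.
  - rewrite !in_app_iff in *; destruct Hc as [Hc|Hc];
      [destruct (IHY1 Hc) | destruct (IHY2 Hc)]; tauto.
Qed.

Lemma fv_e_apply_ctx_closed (X : nat -> Prop) (T : ctx) (A : typ) :
  (forall b t, In (CSolved b t) T -> X b -> forall x, In x (fv_e t) -> X x) ->
  (forall x, In x (fv_e A) -> X x) -> forall x, In x (fv_e (apply_ctx T A)) -> X x.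
Proof.
  induction T as [|e T IH]; intros Hcl HA; auto.
  assert (IH' : forall x, In x (fv_e (apply_ctx T A)) -> X x)
    by (apply IH; auto; intros; eapply Hcl; simpl; eauto).
  destruct e; simpl; auto.
  intros x Hx; apply fv_e_subst_ex in Hx; destruct Hx as [[Hx _]|[Hx Hn]]; auto.
  eapply Hcl; [simpl; left; reflexivity | apply IH' | exact Hx]; auto.
Qed.

Lemma fv_e_apply_ctx_unsolved (T : ctx) (th : nat -> typ) (U E : list nat) (A : typ) (c : nat) :
  respects th U E T -> NoDup (E ++ evars T) -> In c (fv_e (apply_ctx T A)) ->
  (In c (fv_e A) \/ In c (E ++ evars T)) /\ (forall t, ~ In (CSolved c t) T).
Proof.
  revert th U E; induction T as [|e T IH]; intros th U E Hok Hnd Hin.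
  - simpl in *; split; [auto | intros t []].
  - destruct Hok as [He Hok].
    assert (Hnd' : NoDup ((E ++ entry_evars e) ++ evars T))
      by (rewrite <- app_assoc, <- evars_cons; auto).
    rewrite evars_cons, app_assoc.
    destruct e; simpl in Hin;
      try (destruct (IH _ _ _ Hok Hnd' Hin) as [H1 H2];
           split; [auto | intros t0 [Ht0|Ht0]; [discriminate | eapply H2; eauto]]; fail).
    apply fv_e_subst_ex in Hin; destruct Hin as [[Hin Hne]|[Hin Hb]].
    + destruct (IH _ _ _ Hok Hnd' Hin) as [H1 H2]; split; auto.
      intros t0 [Ht0|Ht0]; [injection Ht0; intros; subst; congruence | eapply H2; eauto].
    + simpl in He; apply (proj2 He) in Hin.
      pose proof (NoDup_app_disjoint _ _ _ Hnd Hin) as Hd; rewrite evars_cons in Hd.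
      split; [right; rewrite !in_app_iff; auto |].
      intros t0 [Ht0|Ht0].
      * injection Ht0; intros; subst; apply Hd; simpl; auto.
      * apply Hd; simpl; right; eapply in_evars_CSolved; eauto.
Qed.

Definition is_evar_entry (e : entry) : Prop :=
  match e with CEx _ | CSolved _ _ => True | _ => False end.
Definition is_scope_entry (e : entry) : Prop :=
  match e with CUVar _ | CMarker _ => True | _ => False end.

(* A syntactic stand-in for the paper's context extension: existentials may be solved or added. *)
Inductive ctx_ext : ctx -> ctx -> Prop :=
| ctx_ext_nil : ctx_ext [] []
| ctx_ext_keep : forall e G D, ctx_ext G D -> ctx_ext (e :: G) (e :: D)
| ctx_ext_solve : forall a t G D, ctx_ext G D -> ctx_ext (CEx a :: G) (CSolved a t :: D)
| ctx_ext_new : forall e G D, is_evar_entry e -> ctx_ext G D -> ctx_ext G (e :: D).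

Lemma ctx_ext_refl (G : ctx) : ctx_ext G G.
Proof. induction G; constructor; auto. Qed.

Lemma ctx_ext_app (G1 D1 G2 D2 : ctx) :
  ctx_ext G1 D1 -> ctx_ext G2 D2 -> ctx_ext (G1 ++ G2) (D1 ++ D2).
Proof. induction 1; simpl; intros; try constructor; auto. Qed.

Lemma ctx_ext_trans (G T D : ctx) : ctx_ext G T -> ctx_ext T D -> ctx_ext G D.
Proof.
  intros HG HT; revert G HG; induction HT; intros G0 HG.
  - auto.
  - inversion HG; subst; constructor; auto.
  - inversion HG; subst; constructor; simpl; auto.
  - constructor; auto.
Qed.

Lemma ctx_ext_uvars (G D : ctx) : ctx_ext G D -> uvars D = uvars G.
Proof. induction 1; auto; destruct e; simpl in *; try contradiction; congruence. Qed.

Lemma ctx_ext_markers (G D : ctx) : ctx_ext G D -> markers D = markers G.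
Proof. induction 1; auto; destruct e; simpl in *; try contradiction; congruence. Qed.

Lemma ctx_ext_evars (G D : ctx) (x : nat) : ctx_ext G D -> In x (evars G) -> In x (evars D).
Proof.
  induction 1; intros Hx; auto; rewrite ?evars_cons, ?in_app_iff in *; simpl in *; tauto.
Qed.

Lemma ctx_ext_split (G1 G2 X : ctx) (e : entry) :
  ctx_ext (G1 ++ e :: G2) X -> is_scope_entry e ->
  exists X1 X2, X = X1 ++ e :: X2 /\ ctx_ext G1 X1 /\ ctx_ext G2 X2.
Proof.
  intros Hext He; remember (G1 ++ e :: G2) as G eqn:HG; revert G1 HG.
  induction Hext; intros G1' HG.
  - destruct G1'; discriminate.
  - destruct G1' as [|f G1']; simpl in HG; injection HG; intros; subst.
    + exists [], D; repeat split; auto; constructor.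
    + destruct (IHHext _ eq_refl) as [X1 [X2 [-> [? ?]]]].
      exists (f :: X1), X2; repeat split; auto; constructor; auto.
  - destruct G1' as [|f G1']; simpl in HG; injection HG; intros; subst.
    + contradiction.
    + destruct (IHHext _ eq_refl) as [X1 [X2 [-> [? ?]]]].
      exists (CSolved a t :: X1), X2; repeat split; auto; constructor; auto.
  - destruct (IHHext _ HG) as [X1 [X2 [-> [? ?]]]].
    exists (e0 :: X1), X2; repeat split; auto; constructor; auto.
Qed.

Definition within (S : list nat) (G : ctx) (x : nat) : Prop := In x S \/ ~ In x (evars G).

Definition new_entry_within (S : list nat) (G : ctx) (e : entry) : Prop :=
  match e with
  | CEx b => ~ In b (evars G)
  | CSolved b t => within S G b /\ (forall x, In x (fv_e t) -> within S G x)
  | _ => False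
  end.

(* Every solution added in [D] is for, and mentions only, variables of [S] or fresh ones;
   this is what keeps the second variable of an articulation unsolved. *)
Definition solves_within (G : ctx) (S : list nat) (D : ctx) : Prop :=
  forall e, In e D -> In e G \/ new_entry_within S G e.

Lemma solves_within_trans (G T D : ctx) (S S' : list nat) :
  solves_within G S T -> solves_within T S' D ->
  (forall x, In x (evars G) -> In x (evars T)) -> (forall x, In x S' -> within S G x) ->
  solves_within G S D.
Proof.
  unfold solves_within, within; intros HGT HTD Hev HS e He.
  destruct (HTD _ He) as [HeT|Hnew]; auto.
  right; destruct e; simpl in *; unfold within in *; try contradiction.
  - intro; apply Hnew; auto.
  - destruct Hnew as [Hb Ht]; split.
    + destruct Hb as [Hb|Hb]; [auto | right; intro; apply Hb; auto].
    + intros x Hx; destruct (Ht _ Hx) as [Hy|Hy]; [auto | right; intro; apply Hy; auto].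
Qed.

Lemma solves_within_unsolved (G D : ctx) (S : list nat) (c : nat) :
  solves_within G S D -> (forall x, In x (evars G) -> In x (evars D)) ->
  NoDup (evars G) -> In (CEx c) G -> ~ In c S -> In (CEx c) D.
Proof.
  intros Hfr Hev Hnd Hc HcS.
  destruct (in_evars_inv D c) as [?|[t Ht]]; auto using in_evars_CEx.
  exfalso; destruct (Hfr _ Ht) as [Hg|[[Hn|Hn] _]].
  - eapply NoDup_evars_solved_unsolved; eauto.
  - auto.
  - apply Hn; eapply in_evars_CEx; eauto.
Qed.

Lemma solves_within_prefix (G M X1 X2 : ctx) (S S' : list nat) :
  solves_within (G ++ M) S' (X1 ++ X2) ->
  (forall e, In e M -> In e X1 -> False) ->
  (forall x, In x S' -> within S G x) ->
  solves_within G S X1.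
Proof.
  unfold solves_within, within; intros Hfr HM HS e He.
  assert (Hnot : forall x, ~ In x (evars (G ++ M)) -> ~ In x (evars G))
    by (intros x Hx Hx'; apply Hx; rewrite evars_app, in_app_iff; auto).
  destruct (Hfr e) as [HeG|Hnew]; [rewrite in_app_iff; auto | |].
  - rewrite in_app_iff in HeG; destruct HeG as [HeG|HeM]; auto.
    exfalso; eauto.
  - right; destruct e; simpl in *; unfold within in *; try contradiction; auto.
    destruct Hnew as [Hb Ht]; split.
    + destruct Hb; auto.
    + intros x Hx; destruct (Ht _ Hx); auto.
Qed.

Definition agree_on (G : ctx) (th th' : nat -> typ) : Prop :=
  forall c, In c (evars G) -> th' c = th c.

Definition unsolved_in (G : ctx) (A : typ) : Prop := forall c, In c (fv_e A) -> In (CEx c) G.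

Definition update (th : nat -> typ) (a : nat) (t : typ) : nat -> typ :=
  fun c => if Nat.eqb c a then t else th c.

Definition ext_complete (G : ctx) (th : nat -> typ) (D : ctx) (th' : nat -> typ) : Prop :=
  completes D th' /\ ctx_ext G D /\ agree_on G th th'.

Definition ext_complete_in (S : list nat) (G : ctx) (th : nat -> typ) (D : ctx)
    (th' : nat -> typ) : Prop :=
  ext_complete G th D th' /\ solves_within G S D.

Lemma update_eq (th : nat -> typ) (a : nat) (t : typ) : update th a t a = t.
Proof. unfold update; rewrite Nat.eqb_refl; auto. Qed.

Lemma update_neq (th : nat -> typ) (a c : nat) (t : typ) : c <> a -> update th a t c = th c.
Proof. unfold update; intros; destruct (Nat.eqb_spec c a); congruence. Qed.

Lemma agree_on_refl (G : ctx) (th : nat -> typ) : agree_on G th th.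
Proof. intros c _; auto. Qed.

Lemma agree_on_update (G : ctx) (th : nat -> typ) (a : nat) (t : typ) :
  ~ In a (evars G) -> agree_on G th (update th a t).
Proof. intros Ha c Hc; apply update_neq; intros ->; auto. Qed.

Lemma ext_complete_refl (G : ctx) (th : nat -> typ) : completes G th -> ext_complete G th G th.
Proof. intros HI; split; [exact HI | split; auto using ctx_ext_refl, agree_on_refl]. Qed.

Lemma ext_complete_trans (G T D : ctx) (th th1 th2 : nat -> typ) :
  ext_complete G th T th1 -> ext_complete T th1 D th2 -> ext_complete G th D th2.
Proof.
  intros [_ [X1 A1]] [I2 [X2 A2]]; split; [auto | split].
  - eapply ctx_ext_trans; eauto.
  - intros c Hc; rewrite A2, A1; eauto using ctx_ext_evars.
Qed.

Lemma ext_complete_in_trans (G T D : ctx) (th th1 th2 : nat -> typ) (S S1 S2 : list nat) :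
  ext_complete_in S1 G th T th1 -> ext_complete_in S2 T th1 D th2 ->
  (forall x, In x S1 -> within S G x) -> (forall x, In x S2 -> within S G x) ->
  ext_complete_in S G th D th2.
Proof.
  intros [R1 F1] [R2 F2] H1 H2; split; [eapply ext_complete_trans; eauto |].
  assert (F1' : solves_within G S T)
    by (eapply solves_within_trans with (T := G); eauto; intros e He; auto).
  apply (solves_within_trans G T D S S2 F1' F2); auto.
  intros; eapply ctx_ext_evars; [apply R1 | auto].
Qed.

Lemma esubst_agree_on (G : ctx) (th th' : nat -> typ) (A : typ) :
  agree_on G th th' -> unsolved_in G A -> esubst th' A = esubst th A.
Proof. intros Ag HA; apply esubst_ext_in; intros c Hc; apply Ag, in_evars_CEx; auto. Qed.

Lemma esubst_apply_ctx_complete (G T : ctx) (th th1 : nat -> typ) (A : typ) :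
  ext_complete G th T th1 -> unsolved_in G A ->
  esubst th1 (apply_ctx T A) = esubst th A /\ unsolved_in T (apply_ctx T A).
Proof.
  intros [[Hok [Hnd _]] [X Ag]] HA; split.
  - rewrite esubst_apply_ctx by (intros; eapply respects_solved; eauto).
    eapply esubst_agree_on; eauto.
  - intros c Hc.
    destruct (fv_e_apply_ctx_unsolved T th1 [] [] A c Hok Hnd Hc) as [[H|H] Hns];
      apply in_evars_unsolved; auto.
    eapply ctx_ext_evars; eauto using in_evars_CEx.
Qed.

Lemma completes_snoc_uvar (G : ctx) (th : nat -> typ) (b : nat) :
  completes G th -> completes (G ++ [CUVar b]) th.
Proof.
  intros [Hok [Hnd Hth]]; split; [| split]; auto.
  - apply respects_app; split; simpl; auto.
  - rewrite evars_app, app_nil_r; auto.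
Qed.

Lemma completes_snoc_marker_ex (G : ctx) (th : nat -> typ) (b : nat) (s : typ) :
  completes G th -> ~ In b (evars G) -> mono s -> lc_at 0 s -> incl (fv_u s) (uvars G) ->
  completes (G ++ [CMarker b; CEx b]) (update th b s).
Proof.
  intros [Hok [Hnd Hth]] Hb Hm Hc Hu; split; [| split].
  - apply respects_app; split.
    + eapply respects_agree; [| eauto]. intros c [[]|Hc']. apply update_neq; intros ->; auto.
    + simpl; rewrite update_eq; repeat split; auto. rewrite !app_nil_r; auto.
  - rewrite evars_app; simpl. apply NoDup_app; auto.
    + repeat constructor; auto.
    + intros x Hx [<-|[]]; auto.
  - intros c; unfold update; destruct (Nat.eqb c b); auto.
Qed.

Lemma ext_complete_truncate (G M X : ctx) (e : entry) (th th1 th' : nat -> typ) :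
  ext_complete (G ++ e :: M) th1 X th' -> is_scope_entry e -> agree_on G th th1 ->
  exists X1 X2, X = X1 ++ e :: X2 /\ ext_complete G th X1 th' /\ ctx_ext M X2.
Proof.
  intros [[Hok [Hnd Hth]] [Hext Hagr]] He Hag.
  destruct (ctx_ext_split _ _ _ _ Hext He) as [X1 [X2 [-> [He1 He2]]]].
  exists X1, X2; split; [auto | split; [split; [split; [| split] | split] | auto]]; auto.
  - apply respects_app in Hok; tauto.
  - rewrite evars_app in Hnd; eapply NoDup_app_remove_r; eauto.
  - intros c Hc. rewrite Hagr, Hag; auto. rewrite evars_app, in_app_iff; auto.
Qed.

Lemma ext_complete_in_truncate_uvar (G X : ctx) (b : nat) (th th1 th' : nat -> typ)
    (S S' : list nat) :
  ext_complete_in S' (G ++ [CUVar b]) th1 X th' -> agree_on G th th1 -> ~ In b (uvars G) ->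
  (forall x, In x S' -> within S G x) ->
  exists X1 X2, X = X1 ++ CUVar b :: X2 /\ ext_complete_in S G th X1 th'.
Proof.
  intros [HR Hfr] Hag Hb HS.
  destruct (ext_complete_truncate G [] X (CUVar b) th th1 th' HR I Hag)
    as [X1 [X2 [-> [HR1 _]]]].
  exists X1, X2; split; [auto | split; auto].
  eapply solves_within_prefix with (M := [CUVar b]); eauto.
  intros e [<-|[]] He. apply Hb.
  rewrite <- (ctx_ext_uvars _ _ (proj1 (proj2 HR1))). apply in_uvars_iff; auto.
Qed.

Lemma ext_complete_in_truncate_marker (G X : ctx) (b : nat) (th th1 th' : nat -> typ)
    (S S' : list nat) :
  ext_complete_in S' (G ++ [CMarker b; CEx b]) th1 X th' -> agree_on G th th1 ->
  ~ In b (markers G) -> (forall x, In x S' -> within S G x) ->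
  exists X1 X2, X = X1 ++ CMarker b :: X2 /\ ext_complete_in S G th X1 th'.
Proof.
  intros [HR Hfr] Hag Hb HS.
  pose proof (proj1 (proj2 (proj1 HR))) as Hnd.
  destruct (ext_complete_truncate G [CEx b] X (CMarker b) th th1 th' HR I Hag)
    as [X1 [X2 [-> [HR1 HX2]]]].
  exists X1, X2; split; [auto | split; auto].
  eapply solves_within_prefix with (M := [CMarker b; CEx b]); eauto.
  intros e [<-|[<-|[]]] He.
  - apply Hb. rewrite <- (ctx_ext_markers _ _ (proj1 (proj2 HR1))). apply in_markers_iff; auto.
  - rewrite evars_app in Hnd.
    apply (NoDup_app_disjoint _ _ b Hnd); [eapply in_evars_CEx; eauto |].
    simpl; apply (ctx_ext_evars [CEx b] X2); simpl; auto.
Qed.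

Lemma ext_complete_in_solve (G1 G2 : ctx) (b : nat) (t : typ) (th : nat -> typ) (S : list nat) :
  completes (G1 ++ CEx b :: G2) th -> th b = esubst th t -> incl (fv_e t) (evars G1) ->
  In b S -> incl (fv_e t) S ->
  ext_complete_in S (G1 ++ CEx b :: G2) th (G1 ++ CSolved b t :: G2) th.
Proof.
  intros [Hok [Hnd Hth]] Hb Ht HbS HtS.
  assert (Hev : evars (G1 ++ CSolved b t :: G2) = evars (G1 ++ CEx b :: G2))
    by (rewrite !evars_app; reflexivity).
  split; [split; [split; [| split] | split] |]; auto.
  - apply respects_replace with (e := CEx b); simpl; auto.
  - rewrite Hev; auto.
  - apply ctx_ext_app; [apply ctx_ext_refl | apply ctx_ext_solve, ctx_ext_refl].
  - apply agree_on_refl.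
  - intros e He; rewrite in_app_iff in He; destruct He as [He|[<-|He]].
    + left; rewrite in_app_iff; auto.
    + right; split; [left; auto | intros; left; auto].
    + left; rewrite in_app_iff; simpl; auto.
Qed.

Lemma respects_articulate (G1 G2 : ctx) (a a1 a2 : nat) (th th1 : nat -> typ) (t1 t2 : typ) :
  respects th [] [] (G1 ++ CEx a :: G2) -> th a = TArr t1 t2 -> th1 a1 = t1 -> th1 a2 = t2 ->
  (forall c, In c (evars G1 ++ a :: evars G2) -> th1 c = th c) ->
  respects th1 [] [] (G1 ++ [CEx a2; CEx a1; CSolved a (TArr (TEx a1) (TEx a2))] ++ G2).
Proof.
  intros Hok Ha E1 E2 Hagr.
  assert (Ea : th1 a = th a) by (apply Hagr; rewrite in_app_iff; simpl; auto).
  apply respects_app in Hok; destruct Hok as [Hok1 [HokA Hok2]].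
  simpl in HokA; rewrite Ha in HokA; simpl in HokA.
  apply respects_app; split.
  - eapply respects_agree; [| exact Hok1].
    intros c [[]|Hc]; apply Hagr; rewrite in_app_iff; auto.
  - simpl; rewrite E1, E2, Ea, Ha; repeat split.
    + intros x Hx; apply HokA; rewrite in_app_iff; auto.
    + intros x Hx; rewrite app_nil_r; apply HokA; rewrite in_app_iff; auto.
    + intros x [<-|[<-|[]]]; rewrite !in_app_iff; simpl; auto.
    + eapply respects_weaken; [| | eapply respects_agree; [| exact Hok2]].
      * rewrite !app_nil_r; apply incl_refl.
      * intros x Hx; rewrite !in_app_iff in *; simpl in *; tauto.
      * intros c Hc; apply Hagr; rewrite !in_app_iff in *; simpl in *; tauto.
Qed.

Lemma solves_within_articulate (G1 G2 : ctx) (a a1 a2 : nat) (S : list nat) :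
  ~ In a1 (evars (G1 ++ CEx a :: G2)) -> ~ In a2 (evars (G1 ++ CEx a :: G2)) -> In a S ->
  solves_within (G1 ++ CEx a :: G2) S
    (G1 ++ [CEx a2; CEx a1; CSolved a (TArr (TEx a1) (TEx a2))] ++ G2).
Proof.
  intros Ha1 Ha2 HaS e He; rewrite in_app_iff in He; destruct He as [He|He];
    [left; rewrite in_app_iff; auto |].
  simpl in He; destruct He as [<-|[<-|[<-|He]]]; simpl.
  - right; auto.
  - right; auto.
  - right; split; [left; auto |]. intros x [<-|[<-|[]]]; right; auto.
  - left; rewrite in_app_iff; simpl; auto.
Qed.

Lemma ext_complete_in_articulate (G1 G2 : ctx) (a a1 a2 : nat) (th : nat -> typ) (t1 t2 : typ)
    (S : list nat) :
  completes (G1 ++ CEx a :: G2) th -> th a = TArr t1 t2 ->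
  ~ In a1 (evars (G1 ++ CEx a :: G2)) -> ~ In a2 (evars (G1 ++ CEx a :: G2)) -> a1 <> a2 ->
  In a S ->
  ext_complete_in S (G1 ++ CEx a :: G2) th
    (G1 ++ [CEx a2; CEx a1; CSolved a (TArr (TEx a1) (TEx a2))] ++ G2)
    (update (update th a1 t1) a2 t2).
Proof.
  intros [Hok [Hnd Hth]] Ha Ha1 Ha2 Hne HaS.
  split; [| apply solves_within_articulate; auto].
  rewrite evars_app in Ha1, Ha2; simpl in Ha1, Ha2.
  set (th1 := update (update th a1 t1) a2 t2).
  assert (Hagr : forall c, In c (evars G1 ++ a :: evars G2) -> th1 c = th c).
  { intros c Hc; unfold th1; rewrite !update_neq; auto; intros ->; auto. }
  assert (E1 : th1 a1 = t1) by (unfold th1; rewrite update_neq, update_eq; auto).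
  assert (E2 : th1 a2 = t2) by (unfold th1; rewrite update_eq; auto).
  split; [split; [| split] | split].
  - apply (respects_articulate G1 G2 a a1 a2 th th1 t1 t2); auto.
  - rewrite evars_app in *; simpl.
    apply Permutation_NoDup with (l := a2 :: a1 :: (evars G1 ++ a :: evars G2)).
    + eapply perm_trans; [| apply Permutation_middle]. apply perm_skip, Permutation_middle.
    + constructor; [intros [?|?]; [congruence | contradiction] | constructor; auto].
  - destruct (Hth a) as [Hma Hlca]; rewrite Ha in Hma, Hlca.
    intros c; unfold th1, update; destruct (Nat.eqb c a2), (Nat.eqb c a1); simpl in *;
      intuition; apply Hth.
  - apply ctx_ext_app; [apply ctx_ext_refl |]; simpl.
    do 2 (apply ctx_ext_new; [simpl; auto |]). apply ctx_ext_solve, ctx_ext_refl.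
  - intros c Hc; rewrite evars_app in Hc; apply Hagr; auto.
Qed.

Definition dsub_dir (l : bool) (P : ctx) (A B : typ) : Prop :=
  if l then dsub P A B else dsub P B A.

Definition inst (l : bool) (G : ctx) (a : nat) (B : typ) (D : ctx) : Prop :=
  if l then inst_l G a B D else inst_r G B a D.

Lemma dsub_not_bvar (P : ctx) (A B : typ) (n : nat) : dsub P A B -> A <> TBVar n /\ B <> TBVar n.
Proof. induction 1; split; try discriminate; tauto. Qed.

Lemma dsub_mono_eq (P : ctx) (A B : typ) : dsub P A B -> mono A -> mono B -> A = B.
Proof.
  induction 1; simpl; intros HA HB; try contradiction; auto.
  destruct HA, HB; rewrite IHdsub1, IHdsub2; auto.
Qed.

Lemma dsub_dir_mono_eq (l : bool) (P : ctx) (A B : typ) :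
  dsub_dir l P A B -> mono A -> mono B -> A = B.
Proof. destruct l; simpl; intros Hd HA HB; [| symmetry]; eapply dsub_mono_eq; eauto. Qed.

Lemma dsub_arr_size (P : ctx) (A B : typ) :
  dsub P A B -> (mono A -> arr_size B <= arr_size A) /\ (mono B -> arr_size A <= arr_size B).
Proof.
  induction 1; simpl; split; intros Hm; try contradiction; auto.
  - destruct Hm as [Hm1 Hm2], IHdsub1 as [_ H1], IHdsub2 as [H2 _].
    specialize (H1 Hm1); specialize (H2 Hm2); lia.
  - destruct Hm as [Hm1 Hm2], IHdsub1 as [H1 _], IHdsub2 as [_ H2].
    specialize (H1 Hm1); specialize (H2 Hm2); lia.
  - pose proof (arr_size_open_rec A t 0); pose proof (proj2 IHdsub Hm); unfold open in *; lia.
  - pose proof (arr_size_open_rec B (TFVar b) 0); pose proof (proj1 IHdsub Hm);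
      unfold open in *; lia.
Qed.

Lemma dsub_dir_arr_size (l : bool) (P : ctx) (A B : typ) :
  dsub_dir l P A B -> mono A -> arr_size B <= arr_size A.
Proof. destruct l; simpl; intros Hd; apply (dsub_arr_size _ _ _ Hd). Qed.

Lemma dsub_dir_mono_arr_inv (l : bool) (P : ctx) (t B1 B2 : typ) :
  dsub_dir l P t (TArr B1 B2) -> mono t ->
  exists t1 t2, t = TArr t1 t2 /\ dsub_dir (negb l) P t1 B1 /\ dsub_dir l P t2 B2.
Proof. destruct l; simpl; intros Hd Ht; inversion Hd; subst; simpl in *; eauto; contradiction. Qed.

Lemma dsub_mono_all_r_inv (P : ctx) (t B : typ) :
  dsub P t (TAll B) -> mono t ->
  exists b, fresh_u P b [t; B] /\ dsub (P ++ [CUVar b]) t (open B (TFVar b)).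
Proof. intros Hd Ht; inversion Hd; subst; simpl in *; eauto; contradiction. Qed.

Lemma dsub_mono_all_l_inv (P : ctx) (t A : typ) :
  dsub P (TAll A) t -> mono t -> exists s, mono s /\ wf_typ P s /\ dsub P (open A s) t.
Proof. intros Hd Ht; inversion Hd; subst; simpl in *; eauto; contradiction. Qed.

Lemma inst_solve (l : bool) (G1 G2 : ctx) (a : nat) (t : typ) :
  mono t -> wf_typ G1 t -> inst l (G1 ++ CEx a :: G2) a t (G1 ++ CSolved a t :: G2).
Proof. destruct l; constructor; auto. Qed.

Lemma inst_reach (l : bool) (G1 G2 G3 : ctx) (a b : nat) :
  inst l (G1 ++ CEx a :: G2 ++ CEx b :: G3) a (TEx b)
    (G1 ++ CEx a :: G2 ++ CSolved b (TEx a) :: G3).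
Proof. destruct l; constructor. Qed.

Lemma inst_arr (l : bool) (G1 G2 T D : ctx) (a a1 a2 : nat) (A1 A2 : typ) :
  a1 <> a2 -> a1 <> a -> a2 <> a ->
  fresh_e (G1 ++ CEx a :: G2) a1 [A1; A2] -> fresh_e (G1 ++ CEx a :: G2) a2 [A1; A2] ->
  inst (negb l) (G1 ++ [CEx a2; CEx a1; CSolved a (TArr (TEx a1) (TEx a2))] ++ G2) a1 A1 T ->
  inst l T a2 (apply_ctx T A2) D ->
  inst l (G1 ++ CEx a :: G2) a (TArr A1 A2) D.
Proof.
  destruct l; simpl; intros;
    [eapply instl_arr with (a1 := a1) (a2 := a2) | eapply instr_arr with (a1 := a1) (a2 := a2)];
    eauto.
Qed.

Definition inst_ready (P G : ctx) (th : nat -> typ) (a : nat) (B : typ) : Prop :=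
  completes G th /\ uvars P = uvars G /\ In (CEx a) G /\ unsolved_in G B /\ ~ In a (fv_e B).

Definition inst_complete_for (P G : ctx) (th : nat -> typ) (a : nat) (B : typ) : Prop :=
  forall l, dsub_dir l P (th a) (esubst th B) ->
  exists D th', inst l G a B D /\ ext_complete_in (a :: fv_e B) G th D th'.

Lemma completes_unsolved_fv_u (G1 G2 : ctx) (a : nat) (th : nat -> typ) :
  completes (G1 ++ CEx a :: G2) th -> incl (fv_u (th a)) (uvars G1).
Proof. intros [Hok _]; apply respects_app in Hok; apply Hok. Qed.

Lemma inst_complete_ground (P G : ctx) (th : nat -> typ) (a : nat) (B : typ) :
  mono B -> decl_typ B -> inst_ready P G th a B -> inst_complete_for P G th a B.
Proof.
  intros Hm Hdecl [HI [_ [Ha _]]] l Hd.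
  rewrite esubst_decl in Hd by auto.
  destruct (in_split _ _ Ha) as [G1 [G2 ->]].
  assert (E : th a = B) by (eapply dsub_dir_mono_eq; eauto; apply HI).
  exists (G1 ++ CSolved a B :: G2), th; split.
  - apply inst_solve; auto.
    apply wf_typ_at_intro.
    + rewrite <- E; apply HI.
    + rewrite <- E; eapply completes_unsolved_fv_u; eauto.
    + unfold decl_typ in Hdecl; rewrite Hdecl; intros _ [].
  - unfold decl_typ in Hdecl.
    apply ext_complete_in_solve; rewrite ?Hdecl, ?esubst_decl; simpl; auto using incl_nil_l.
Qed.

Lemma dsub_dir_not_bvar (l : bool) (P : ctx) (A : typ) (n : nat) : ~ dsub_dir l P A (TBVar n).
Proof. destruct l; simpl; intros Hd; apply dsub_not_bvar with (n := n) in Hd; tauto. Qed.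

Lemma inst_complete_ex (P G : ctx) (th : nat -> typ) (a b : nat) :
  inst_ready P G th a (TEx b) -> inst_complete_for P G th a (TEx b).
Proof.
  intros [HI [_ [Ha [HB HaB]]]] l Hd; simpl in Hd.
  assert (Hba : b <> a) by (intros ->; apply HaB; simpl; auto).
  assert (E : th a = th b) by (eapply dsub_dir_mono_eq; eauto; apply HI).
  assert (HSb : incl [a] (a :: fv_e (TEx b))) by (intros x [<-|[]]; simpl; auto).
  destruct (in_split _ _ Ha) as [G1 [G2 ->]].
  pose proof (HB b (or_introl eq_refl)) as Hb.
  rewrite in_app_iff in Hb; destruct Hb as [Hb|[Hb|Hb]]; [| congruence |].
  - exists (G1 ++ CSolved a (TEx b) :: G2), th; split.
    + apply inst_solve; [exact I | simpl; eapply in_evars_CEx; eauto].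
    + apply ext_complete_in_solve; simpl; auto.
      * intros x [<-|[]]; eapply in_evars_CEx; eauto.
      * intros x [<-|[]]; simpl; auto.
  - destruct (in_split _ _ Hb) as [G3 [G4 ->]].
    exists (G1 ++ CEx a :: G3 ++ CSolved b (TEx a) :: G4), th; split; [apply inst_reach |].
    rewrite !app_comm_cons, !app_assoc in *.
    apply ext_complete_in_solve; simpl; auto.
    intros x [<-|[]]; rewrite evars_app, in_app_iff; simpl; auto.
Qed.

Section InstAll.

Variables (P G : ctx) (th : nat -> typ) (a : nat) (B0 : typ).

Hypothesis IH : forall P' G' th' B', th' a = th a -> typ_size B' < typ_size (TAll B0) ->
  inst_ready P' G' th' a B' -> inst_complete_for P' G' th' a B'.

Hypothesis Hready : inst_ready P G th a (TAll B0).

Lemma inst_complete_all_l :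
  dsub P (th a) (esubst th (TAll B0)) ->
  exists D th', inst_l G a (TAll B0) D /\ ext_complete_in (a :: fv_e (TAll B0)) G th D th'.
Proof.
  destruct Hready as [HI [HuP [Ha [HB HaB]]]]; intros Hd.
  destruct (dsub_mono_all_r_inv _ _ _ Hd (proj1 (proj2 (proj2 HI) a))) as [b [[Hbu Hbf] Hd']].
  rewrite Forall_forall in Hbf.
  assert (HbB : ~ In b (fv_u B0))
    by (intro; apply (Hbf (esubst th B0)); simpl; auto using fv_u_esubst).
  assert (HbG : ~ In b (uvars G)) by (rewrite <- HuP; auto).
  assert (Hfv : fv_e (open B0 (TFVar b)) = fv_e B0) by apply fv_e_open_rec_fvar.
  destruct (IH (P ++ [CUVar b]) (G ++ [CUVar b]) th (open B0 (TFVar b))) with (l := true)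
    as [X [th' [Hinst HR]]]; auto.
  - unfold open; rewrite typ_size_open_rec; simpl; auto.
  - split; [apply completes_snoc_uvar; auto | repeat split].
    + rewrite !uvars_app, HuP; auto.
    + rewrite in_app_iff; auto.
    + intros c Hc; rewrite Hfv in Hc; rewrite in_app_iff; auto.
    + rewrite Hfv; auto.
  - simpl; unfold open; rewrite esubst_open_rec by apply HI; auto.
  - rewrite Hfv in HR.
    destruct (ext_complete_in_truncate_uvar G X b th th th' (a :: fv_e (TAll B0)) _ HR)
      as [X1 [X2 [-> HR1]]]; auto using agree_on_refl.
    + intros x Hx; left; auto.
    + exists X1, th'; split; auto.
      eapply instl_allR; eauto. split; auto.
Qed.

Lemma inst_complete_all_r :
  dsub P (esubst th (TAll B0)) (th a) ->
  exists D th', inst_r G (TAll B0) a D /\ ext_complete_in (a :: fv_e (TAll B0)) G th D th'.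
Proof.
  destruct Hready as [HI [HuP [Ha [HB HaB]]]]; intros Hd.
  destruct (dsub_mono_all_l_inv _ _ _ Hd (proj1 (proj2 (proj2 HI) a))) as [s [Hsm [Hsw Hd']]].
  destruct (exists_fresh (evars G ++ markers G ++ fv_e B0 ++ [a])) as [b Hb].
  rewrite !in_app_iff in Hb; simpl in Hb.
  set (th1 := update th b s).
  assert (Hab : a <> b) by tauto.
  assert (Hth1a : th1 a = th a) by (apply update_neq; auto).
  assert (HI1 : completes (G ++ [CMarker b; CEx b]) th1).
  { apply completes_snoc_marker_ex; auto.
    - eapply wf_typ_at_lc; eauto.
    - intros x Hx; rewrite <- HuP; eapply wf_typ_at_fv_u; eauto. }
  assert (Hfv : forall x, In x (fv_e (open B0 (TEx b))) -> x = b \/ In x (fv_e B0))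
    by (intros x; apply fv_e_open_rec_ex).
  destruct (IH P (G ++ [CMarker b; CEx b]) th1 (open B0 (TEx b))) with (l := false)
    as [X [th' [Hinst HR]]]; auto.
  - unfold open; rewrite typ_size_open_rec; simpl; auto.
  - split; [exact HI1 | repeat split].
    + rewrite uvars_app, HuP; simpl; rewrite app_nil_r; auto.
    + rewrite in_app_iff; auto.
    + intros c Hc; rewrite in_app_iff; destruct (Hfv c Hc) as [->|Hc']; simpl; auto.
    + intros Hc; destruct (Hfv a Hc); auto.
  - simpl; unfold open; rewrite esubst_open_rec by apply HI1; simpl.
    rewrite Hth1a; unfold th1; rewrite update_eq.
    rewrite (esubst_ext_in _ th B0); auto.
    intros c Hc; apply update_neq; intros ->; tauto.
  - destruct (ext_complete_in_truncate_marker G X b th th1 th' (a :: fv_e (TAll B0)) _ HR)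
      as [X1 [X2 [-> HR1]]].
    + apply agree_on_update; tauto.
    + tauto.
    + intros x [<-|Hx]; [left; left; auto |].
      destruct (Hfv x Hx) as [->|Hx']; [right; tauto | left; right; auto].
    + exists X1, th'; split; auto.
      eapply instr_allL; eauto. repeat split; try tauto. repeat constructor; tauto.
Qed.

End InstAll.

Lemma inst_complete_all (P G : ctx) (th : nat -> typ) (a : nat) (B0 : typ) :
  (forall P' G' th' B', th' a = th a -> typ_size B' < typ_size (TAll B0) ->
     inst_ready P' G' th' a B' -> inst_complete_for P' G' th' a B') ->
  inst_ready P G th a (TAll B0) -> inst_complete_for P G th a (TAll B0).
Proof.
  intros IH Hready [|] Hd;
    [apply (inst_complete_all_l P G th a B0 IH Hready)
    | apply (inst_complete_all_r P G th a B0 IH Hready)];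
    auto.
Qed.

Lemma fv_e_apply_ctx_within (G T : ctx) (S : list nat) (A : typ) :
  NoDup (evars G) -> solves_within G S T -> (forall x, In x S -> In (CEx x) G) ->
  unsolved_in G A -> forall x, In x (fv_e (apply_ctx T A)) -> within S G x \/ In x (fv_e A).
Proof.
  intros Hnd Hfr HS HA.
  apply fv_e_apply_ctx_closed; [| auto].
  intros b t Hbt Xb x Hx; destruct (Hfr _ Hbt) as [HG|[_ Ht]]; [exfalso | auto].
  destruct Xb as [[Hb|Hb]|Hb].
  - exact (NoDup_evars_solved_unsolved _ _ _ Hnd (HS _ Hb) HG).
  - exact (Hb (in_evars_CSolved _ _ _ HG)).
  - exact (NoDup_evars_solved_unsolved _ _ _ Hnd (HA _ Hb) HG).
Qed.

Lemma unsolved_in_arr_inv (G : ctx) (B1 B2 : typ) :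
  unsolved_in G (TArr B1 B2) -> unsolved_in G B1 /\ unsolved_in G B2.
Proof. intros HB; split; intros c Hc; apply HB; simpl; rewrite in_app_iff; auto. Qed.

Lemma unsolved_in_articulated (G1 G2 : ctx) (a : nat) (M : ctx) (B : typ) :
  unsolved_in (G1 ++ CEx a :: G2) B -> ~ In a (fv_e B) -> unsolved_in (G1 ++ M ++ G2) B.
Proof.
  intros HB Ha c Hc; specialize (HB c Hc).
  rewrite !in_app_iff in *; destruct HB as [?|[Heq|?]]; auto.
  injection Heq as ->; contradiction.
Qed.

Lemma inst_ready_second_premise (P G' T : ctx) (th1 th2 : nat -> typ) (a1 a2 : nat) (B1 B2 : typ) :
  uvars P = uvars G' -> NoDup (evars G') -> ext_complete_in (a1 :: fv_e B1) G' th1 T th2 ->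
  In (CEx a1) G' -> In (CEx a2) G' -> unsolved_in G' B1 -> unsolved_in G' B2 ->
  ~ In a2 (a1 :: fv_e B1 ++ fv_e B2) ->
  inst_ready P T th2 a2 (apply_ctx T B2) /\ th2 a2 = th1 a2 /\
  esubst th2 (apply_ctx T B2) = esubst th1 B2 /\
  (forall x, In x (fv_e (apply_ctx T B2)) -> within (a1 :: fv_e B1) G' x \/ In x (fv_e B2)).
Proof.
  intros HuP Hnd [HR Hfr] Ha1 Ha2 HB1 HB2 Hfresh; simpl in Hfresh; rewrite in_app_iff in Hfresh.
  assert (HS1 : forall x, In x (a1 :: fv_e B1) -> In (CEx x) G') by (intros x [<-|Hx]; auto).
  pose proof (fv_e_apply_ctx_within G' T _ B2 Hnd Hfr HS1 HB2) as Hcl.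
  destruct (esubst_apply_ctx_complete _ _ _ _ B2 HR HB2) as [Es HB2T].
  destruct HR as [HI [Hext Hag]].
  refine (conj (conj HI (conj _ (conj _ (conj HB2T _)))) (conj _ (conj Es _))); auto.
  - rewrite (ctx_ext_uvars _ _ Hext); auto.
  - apply (solves_within_unsolved G' T (a1 :: fv_e B1) a2 Hfr); auto.
    + intros x Hx; eapply ctx_ext_evars; eauto.
    + simpl; tauto.
  - intros Hx; destruct (Hcl _ Hx) as [[Hy|Hy]|Hy]; simpl in *; try tauto.
    apply Hy, in_evars_CEx; auto.
  - apply Hag, in_evars_CEx; auto.
Qed.

Lemma fresh_e_pair (G : ctx) (x : nat) (B1 B2 : typ) :
  fresh_e G x [B1; B2] <->
  ~ In x (evars G) /\ ~ In x (markers G) /\ ~ In x (fv_e B1) /\ ~ In x (fv_e B2).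
Proof.
  unfold fresh_e; rewrite !Forall_cons_iff; split; [tauto |].
  intros [? [? [? ?]]]; repeat split; auto.
Qed.

Lemma ext_complete_in_arr_chain (G G' T D : ctx) (th th1 th2 th3 : nat -> typ) (a a1 a2 : nat)
    (B1 B2 : typ) :
  ~ In a1 (evars G) -> ~ In a2 (evars G) ->
  ext_complete_in (a :: fv_e (TArr B1 B2)) G th G' th1 ->
  ext_complete_in (a1 :: fv_e B1) G' th1 T th2 ->
  ext_complete_in (a2 :: fv_e (apply_ctx T B2)) T th2 D th3 ->
  (forall x, In x (fv_e (apply_ctx T B2)) -> within (a1 :: fv_e B1) G' x \/ In x (fv_e B2)) ->
  ext_complete_in (a :: fv_e (TArr B1 B2)) G th D th3.
Proof.
  intros Ha1 Ha2 R0 R1 R2 Hcl.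
  assert (HB : forall x, In x (fv_e B1) \/ In x (fv_e B2) -> In x (a :: fv_e (TArr B1 B2)))
    by (intros; right; simpl; rewrite in_app_iff; auto).
  assert (R01 : ext_complete_in (a :: fv_e (TArr B1 B2)) G th T th2).
  { eapply ext_complete_in_trans; [exact R0 | exact R1 | |].
    - intros x Hx; left; auto.
    - intros x [<-|Hx]; [right | left]; auto. }
  eapply ext_complete_in_trans; [exact R01 | exact R2 | intros x Hx; left; auto |].
  intros x [<-|Hx]; [right; auto |].
  destruct (Hcl x Hx) as [[[<-|Hy]|Hy]|Hy]; unfold within; auto.
  right; intros Hx'; apply Hy; eapply ctx_ext_evars; [apply R0 | auto].
Qed.

Section InstArr.

Variables (P G : ctx) (th : nat -> typ) (a : nat) (B1 B2 : typ).

Hypothesis IH : forall P' G' th' a' B', typ_size (th' a') < typ_size (th a) ->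
  inst_ready P' G' th' a' B' -> inst_complete_for P' G' th' a' B'.

Hypothesis Hready : inst_ready P G th a (TArr B1 B2).

Lemma inst_complete_arr_articulated (l : bool) (G1 G2 : ctx) (a1 a2 : nat) (t1 t2 : typ) :
  G = G1 ++ CEx a :: G2 -> th a = TArr t1 t2 ->
  dsub_dir (negb l) P t1 (esubst th B1) -> dsub_dir l P t2 (esubst th B2) ->
  a1 <> a2 -> fresh_e G a1 [B1; B2] -> fresh_e G a2 [B1; B2] ->
  exists D th', inst l G a (TArr B1 B2) D /\ ext_complete_in (a :: fv_e (TArr B1 B2)) G th D th'.
Proof.
  destruct Hready as [HI [HuP [Ha [HB HaB]]]]; intros -> Ht Hd1 Hd2 Hne Hf1 Hf2.
  apply unsolved_in_arr_inv in HB as [HB1 HB2].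
  simpl in HaB; rewrite in_app_iff in HaB.
  pose proof Hf1 as Hf1'; pose proof Hf2 as Hf2'; rewrite fresh_e_pair in Hf1', Hf2'.
  assert (Ha1 : a1 <> a) by (intros ->; apply (proj1 Hf1'), in_evars_CEx; auto).
  assert (Ha2 : a2 <> a) by (intros ->; apply (proj1 Hf2'), in_evars_CEx; auto).
  set (G' := G1 ++ [CEx a2; CEx a1; CSolved a (TArr (TEx a1) (TEx a2))] ++ G2).
  set (th1 := update (update th a1 t1) a2 t2).
  assert (R0 : ext_complete_in (a :: fv_e (TArr B1 B2)) (G1 ++ CEx a :: G2) th G' th1)
    by (apply ext_complete_in_articulate; simpl; tauto).
  pose proof R0 as [[HI' [Hext Hag]] Hfr].
  assert (HB1' : unsolved_in G' B1) by (eapply unsolved_in_articulated; eauto).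
  assert (HB2' : unsolved_in G' B2) by (eapply unsolved_in_articulated; eauto).
  assert (Hu' : uvars P = uvars G') by (rewrite (ctx_ext_uvars _ _ Hext); auto).
  assert (Hin1 : In (CEx a1) G') by (apply in_or_app; simpl; auto).
  assert (Hin2 : In (CEx a2) G') by (apply in_or_app; simpl; auto).
  assert (E1 : th1 a1 = t1) by (unfold th1; rewrite update_neq, update_eq; auto).
  assert (E2 : th1 a2 = t2) by (unfold th1; rewrite update_eq; auto).
  destruct (IH P G' th1 a1 B1) with (l := negb l) as [T [th2 [Hi1 R1]]].
  - rewrite E1, Ht; simpl; lia.
  - split; [exact HI' | repeat split; auto; tauto].
  - rewrite E1, (esubst_agree_on _ _ _ _ Hag HB1); auto.
  - destruct (inst_ready_second_premise P G' T th1 th2 a1 a2 B1 B2)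
      as [Hready2 [Eth2 [Es2 Hcl]]]; auto; [apply HI' | simpl; rewrite in_app_iff; tauto |].
    destruct (IH P T th2 a2 (apply_ctx T B2)) with (l := l) as [D [th3 [Hi2 R2]]]; auto.
    + rewrite Eth2, E2, Ht; simpl; lia.
    + rewrite Eth2, E2, Es2, (esubst_agree_on _ _ _ _ Hag HB2); auto.
    + exists D, th3; split; [apply inst_arr with (a1 := a1) (a2 := a2) (T := T); auto |].
      apply (ext_complete_in_arr_chain _ G' T D th th1 th2 th3 a a1 a2 B1 B2); tauto.
Qed.

Lemma inst_complete_arr : inst_complete_for P G th a (TArr B1 B2).
Proof.
  intros l Hd.
  destruct (dsub_dir_mono_arr_inv _ _ _ _ _ Hd (proj1 (proj2 (proj2 (proj1 Hready)) a)))
    as [t1 [t2 [Ht [Hd1 Hd2]]]].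
  destruct (in_split _ _ (proj1 (proj2 (proj2 Hready)))) as [G1 [G2 HG]].
  destruct (exists_fresh (evars G ++ markers G ++ fv_e B1 ++ fv_e B2)) as [a1 Ha1].
  destruct (exists_fresh (a1 :: evars G ++ markers G ++ fv_e B1 ++ fv_e B2)) as [a2 Ha2].
  simpl in Ha2; rewrite !in_app_iff in Ha1, Ha2.
  apply (inst_complete_arr_articulated l G1 G2 a1 a2 t1 t2); auto;
    try apply fresh_e_pair; tauto.
Qed.

End InstArr.

Lemma inst_complete_bounded (n : nat) : forall m P G th a B,
  typ_size (th a) <= n -> typ_size B <= m ->
  inst_ready P G th a B -> inst_complete_for P G th a B.
Proof.
  induction n as [|n IHn]; [intros m P G th a B Hn; pose proof (typ_size_pos (th a)); lia |].
  induction m as [|m IHm]; [intros P G th a B _ Hm; pose proof (typ_size_pos B); lia |].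
  intros P G th a B Hn Hm Hready.
  destruct B as [| k | b | b | B0 | B1 B2].
  - apply inst_complete_ground; simpl; auto; reflexivity.
  - intros l Hd; exfalso; eapply dsub_dir_not_bvar; eauto.
  - apply inst_complete_ground; simpl; auto; reflexivity.
  - apply inst_complete_ex; auto.
  - apply inst_complete_all; auto.
    intros P' G' th' B' Heq HB'; apply IHm; [rewrite Heq | simpl in *]; lia.
  - apply inst_complete_arr; auto.
    intros P' G' th' a' B' Hlt; apply (IHn (typ_size B')); lia.
Qed.

Lemma inst_complete (P G : ctx) (th : nat -> typ) (a : nat) (B : typ) :
  inst_ready P G th a B -> inst_complete_for P G th a B.
Proof. apply (inst_complete_bounded (typ_size (th a)) (typ_size B)); auto. Qed.

Lemma typ_eq_dec (A B : typ) : {A = B} + {A <> B}.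
Proof. decide equality; apply Nat.eq_dec. Qed.

Definition is_all (A : typ) : Prop := match A with TAll _ => True | _ => False end.

Lemma occurs_check_dsub_dir (l : bool) (P : ctx) (th : nat -> typ) (a : nat) (C : typ) :
  mono (th a) -> dsub_dir l P (th a) (esubst th C) -> ~ is_all C -> C <> TEx a ->
  ~ In a (fv_e C).
Proof.
  intros Hm Hd HC Hne Ha.
  pose proof (dsub_dir_arr_size _ _ _ _ Hd Hm).
  destruct C as [| | |c|C|C1 C2]; simpl in Ha; try contradiction.
  - destruct Ha as [<-|[]]; auto.
  - apply HC; exact I.
  - pose proof (arr_size_esubst_arr th C1 C2 a Ha); lia.
Qed.

Definition sub_ready (P G : ctx) (th : nat -> typ) (A B : typ) : Prop :=
  completes G th /\ uvars P = uvars G /\ unsolved_in G A /\ unsolved_in G B.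

Definition sub_complete_for (P : ctx) (X Y : typ) : Prop :=
  forall G th A B, X = esubst th A -> Y = esubst th B -> sub_ready P G th A B ->
  exists D th', asub G A B D /\ ext_complete G th D th'.

Lemma sub_complete_inst (l : bool) (P G : ctx) (th : nat -> typ) (a : nat) (C : typ) :
  completes G th -> uvars P = uvars G -> In (CEx a) G -> unsolved_in G C ->
  ~ is_all C -> C <> TEx a -> dsub_dir l P (th a) (esubst th C) ->
  exists D th', (if l then asub G (TEx a) C D else asub G C (TEx a) D) /\ ext_complete G th D th'.
Proof.
  intros HI HuP Ha HC nC Hne Hd.
  assert (Hocc : ~ In a (fv_e C))
    by (eapply occurs_check_dsub_dir; eauto; apply (proj2 (proj2 HI))).
  assert (Hready : inst_ready P G th a C) by (split; [exact HI | repeat split; auto]).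
  destruct (inst_complete P G th a C Hready l Hd) as [D [th' [Hi [HR _]]]].
  exists D, th'; split; auto.
  destruct l; [apply asub_instL | apply asub_instR]; auto.
Qed.

Lemma sub_complete_ex (P G : ctx) (th : nat -> typ) (A B : typ) :
  sub_ready P G th A B -> ~ is_all A -> ~ is_all B -> (exists a, A = TEx a \/ B = TEx a) ->
  dsub P (esubst th A) (esubst th B) -> exists D th', asub G A B D /\ ext_complete G th D th'.
Proof.
  intros [HI [HuP [HA HB]]] nA nB [a Ha] Hd.
  destruct (typ_eq_dec A (TEx a)) as [->|HAa].
  - destruct (typ_eq_dec B (TEx a)) as [->|HBa].
    + exists G, th; split; [apply asub_ex, HA; simpl; auto | apply ext_complete_refl; auto].
    + apply (sub_complete_inst true P G th a B); auto. apply HA; simpl; auto.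
  - destruct Ha as [Ha| ->]; [contradiction |].
    apply (sub_complete_inst false P G th a A); auto.
    + apply HB; simpl; auto.
Qed.

Lemma sub_complete_by_heads (P G : ctx) (th : nat -> typ) (A B : typ) :
  dsub P (esubst th A) (esubst th B) -> ~ is_all (esubst th A) -> ~ is_all (esubst th B) ->
  sub_ready P G th A B ->
  ((forall a, A <> TEx a) -> (forall b, B <> TEx b) ->
     exists D th', asub G A B D /\ ext_complete G th D th') ->
  exists D th', asub G A B D /\ ext_complete G th D th'.
Proof.
  intros Hd nX nY Hready Hstruct.
  assert (nA : ~ is_all A) by (destruct A; simpl in *; auto).
  assert (nB : ~ is_all B) by (destruct B; simpl in *; auto).
  assert (HA : (exists a, A = TEx a) \/ forall a, A <> TEx a)
    by (destruct A; eauto; right; discriminate).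
  assert (HB : (exists b, B = TEx b) \/ forall b, B <> TEx b)
    by (destruct B; eauto; right; discriminate).
  destruct HA as [[a ->]|HA]; [apply (sub_complete_ex P); eauto |].
  destruct HB as [[b ->]|HB]; [apply (sub_complete_ex P); eauto | auto].
Qed.

Lemma sub_complete_var (P : ctx) (a : nat) :
  In (CUVar a) P -> sub_complete_for P (TFVar a) (TFVar a).
Proof.
  intros Ha G th A B HX HY Hready.
  apply (sub_complete_by_heads P); rewrite <- ?HX, <- ?HY; simpl; auto; [constructor; auto |].
  intros nA nB.
  destruct A; simpl in HX; try discriminate; [| exfalso; eapply nA; eauto].
  destruct B; simpl in HY; try discriminate; [| exfalso; eapply nB; eauto].
  injection HX as ->; injection HY as ->.
  exists G, th; split; [| apply ext_complete_refl, Hready].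
  apply asub_var, in_uvars_iff; rewrite <- (proj1 (proj2 Hready)); apply in_uvars_iff; auto.
Qed.

Lemma sub_complete_unit (P : ctx) : sub_complete_for P TUnit TUnit.
Proof.
  intros G th A B HX HY Hready.
  apply (sub_complete_by_heads P); rewrite <- ?HX, <- ?HY; simpl; auto; [constructor |].
  intros nA nB.
  destruct A; simpl in HX; try discriminate; [| exfalso; eapply nA; eauto].
  destruct B; simpl in HY; try discriminate; [| exfalso; eapply nB; eauto].
  exists G, th; split; [apply asub_unit | apply ext_complete_refl, Hready].
Qed.

Lemma sub_complete_arr (P : ctx) (A1 A2 B1 B2 : typ) :
  dsub P (TArr A1 A2) (TArr B1 B2) -> sub_complete_for P B1 A1 -> sub_complete_for P A2 B2 ->
  sub_complete_for P (TArr A1 A2) (TArr B1 B2).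
Proof.
  intros Hd IH1 IH2 G th A B HX HY Hready.
  apply (sub_complete_by_heads P); rewrite <- ?HX, <- ?HY; simpl; auto.
  intros nA nB.
  destruct A as [| | | | |A1' A2']; simpl in HX; try discriminate; [exfalso; eapply nA; eauto |].
  destruct B as [| | | | |B1' B2']; simpl in HY; try discriminate; [exfalso; eapply nB; eauto |].
  injection HX as -> ->; injection HY as -> ->.
  destruct Hready as [HI [HuP [HA HB]]].
  apply unsolved_in_arr_inv in HA as [HA1 HA2]; apply unsolved_in_arr_inv in HB as [HB1 HB2].
  destruct (IH1 G th B1' A1' eq_refl eq_refl) as [T [th1 [Hs1 R1]]];
    [split; [exact HI | repeat split; auto] |].
  destruct (esubst_apply_ctx_complete _ _ _ _ A2' R1 HA2) as [EA HA2'].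
  destruct (esubst_apply_ctx_complete _ _ _ _ B2' R1 HB2) as [EB HB2'].
  assert (Hready2 : sub_ready P T th1 (apply_ctx T A2') (apply_ctx T B2')).
  { split; [apply R1 | repeat split; auto].
    rewrite (ctx_ext_uvars _ _ (proj1 (proj2 R1))); auto. }
  destruct (IH2 T th1 (apply_ctx T A2') (apply_ctx T B2')) as [D [th2 [Hs2 R2]]]; auto.
  exists D, th2; split; [eapply asub_arr; eauto | eapply ext_complete_trans; eauto].
Qed.

Lemma completes_not_all (G : ctx) (th : nat -> typ) (a : nat) (A : typ) :
  completes G th -> th a <> TAll A.
Proof. intros HI Ha; pose proof (proj1 (proj2 (proj2 HI) a)) as Hm; rewrite Ha in Hm; exact Hm. Qed.

Lemma sub_complete_all_l (P : ctx) (A B t : typ) :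
  mono t -> wf_typ P t -> sub_complete_for P (open A t) B -> sub_complete_for P (TAll A) B.
Proof.
  intros Hm Hw IH G th A0 B0 HX HY [HI [HuP [HA HB]]].
  destruct A0 as [| | |a0|A0'|]; simpl in HX; try discriminate;
    [exfalso; eapply completes_not_all; eauto |].
  injection HX as ->.
  destruct (exists_fresh (evars G ++ markers G ++ fv_e A0' ++ fv_e B0)) as [a Ha].
  rewrite !in_app_iff in Ha.
  set (th1 := update th a t).
  assert (HI1 : completes (G ++ [CMarker a; CEx a]) th1).
  { apply completes_snoc_marker_ex; [auto | tauto | auto | eapply wf_typ_at_lc; eauto |].
    intros x Hx; rewrite <- HuP; eapply wf_typ_at_fv_u; eauto. }
  assert (EA : open (esubst th A0') t = esubst th1 (open A0' (TEx a))).
  { unfold open; rewrite esubst_open_rec by apply HI1; simpl; unfold th1; rewrite update_eq.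
    f_equal; apply esubst_ext_in; intros c Hc; rewrite update_neq; auto; intros ->; tauto. }
  assert (EB : esubst th B0 = esubst th1 B0).
  { apply esubst_ext_in; intros c Hc; unfold th1; rewrite update_neq; auto; intros ->; tauto. }
  destruct (IH (G ++ [CMarker a; CEx a]) th1 (open A0' (TEx a)) B0) as [X [th' [Hs HR]]];
    [auto | rewrite HY; auto | |].
  - split; [exact HI1 | repeat split].
    + rewrite uvars_app, HuP; simpl; rewrite app_nil_r; auto.
    + intros c Hc; unfold open in Hc; rewrite in_app_iff.
      destruct (fv_e_open_rec_ex _ _ _ _ Hc) as [->|Hc']; simpl; auto.
    + intros c Hc; rewrite in_app_iff; auto.
  - destruct (ext_complete_truncate G [CEx a] X (CMarker a) th th1 th' HR I)
      as [X1 [X2 [-> [HR1 _]]]]; [apply agree_on_update; tauto |].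
    exists X1, th'; split; auto.
    eapply asub_allL; [| exact Hs]. split; [tauto | split; [tauto | repeat constructor; tauto]].
Qed.

Lemma sub_complete_all_r (P : ctx) (A B : typ) (b : nat) :
  fresh_u P b [A; B] -> sub_complete_for (P ++ [CUVar b]) A (open B (TFVar b)) ->
  sub_complete_for P A (TAll B).
Proof.
  intros [Hbu Hbf] IH G th A0 B0 HX HY [HI [HuP [HA HB]]].
  destruct B0 as [| | |b0|B0'|]; simpl in HY; try discriminate;
    [exfalso; eapply completes_not_all; eauto |].
  injection HY as ->.
  rewrite Forall_forall in Hbf.
  assert (HbA : ~ In b (fv_u A0))
    by (intro; apply (Hbf (esubst th A0)); simpl; auto using fv_u_esubst).
  assert (HbB : ~ In b (fv_u B0'))
    by (intro; apply (Hbf (esubst th B0')); simpl; auto using fv_u_esubst).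
  assert (HbG : ~ In b (uvars G)) by (rewrite <- HuP; auto).
  destruct (IH (G ++ [CUVar b]) th A0 (open B0' (TFVar b))) as [X [th' [Hs HR]]]; [auto | | |].
  - unfold open; rewrite esubst_open_rec by apply HI; auto.
  - split; [apply completes_snoc_uvar; auto | repeat split].
    + rewrite !uvars_app, HuP; auto.
    + intros c Hc; rewrite in_app_iff; auto.
    + intros c Hc; unfold open in Hc; rewrite fv_e_open_rec_fvar in Hc; rewrite in_app_iff; auto.
  - destruct (ext_complete_truncate G [] X (CUVar b) th th th' HR I (agree_on_refl _ _))
      as [X1 [X2 [-> [HR1 _]]]].
    exists X1, th'; split; auto.
    eapply asub_allR; [| exact Hs]. split; [auto | repeat constructor; auto].
Qed.

Lemma asub_complete (P : ctx) (X Y : typ) : dsub P X Y -> sub_complete_for P X Y.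
Proof.
  induction 1.
  - apply sub_complete_var; auto.
  - apply sub_complete_unit.
  - apply sub_complete_arr; auto; constructor; auto.
  - eapply sub_complete_all_l; eauto.
  - eapply sub_complete_all_r; eauto.
Qed.

Lemma decl_ctx_completes (G : ctx) (th : nat -> typ) (U E : list nat) :
  decl_ctx G -> respects th U E G /\ evars G = [].
Proof.
  revert U E; induction G as [|e G IH]; intros U E HD; simpl; auto.
  inversion HD as [|? ? He HG]; subst.
  destruct e; simpl in He; try contradiction; simpl;
    (split; [split; [exact I | apply IH; auto] | apply (IH U E); auto]).
Qed.

Theorem mainTheorem8 (Psi : ctx) (A B : typ) :
  wf_ctx Psi -> decl_ctx Psi -> decl_typ A -> decl_typ B ->
  dsub Psi A B -> exists Delta, asub Psi A B Delta.
Proof.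
  (* Fresh variables are chosen by the rules themselves. *)
  intros _ HD HA HB Hd.
  set (th := fun _ : nat => TUnit).
  destruct (decl_ctx_completes Psi th [] [] HD) as [Hok Hev].
  assert (HI : completes Psi th) by (repeat split; auto; rewrite Hev; constructor).
  destruct (asub_complete Psi A B Hd Psi th A B) as [D [_ [Has _]]];
    [symmetry; apply esubst_decl; auto | symmetry; apply esubst_decl; auto | |].
  - split; [exact HI | repeat split]; intros c Hc;
      [rewrite HA in Hc | rewrite HB in Hc]; contradiction.
  - exists D; auto.
Qed.
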